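(* Let $h,w\ge 4$ and $G=K_w(U)\sqcap K_h$ where $U\subsetneq V(K_w)$ and $|U|=r$ (so $r\ne w$). Then $Z(G)\le wh-(h+r)$.
   Context: All graphs are finite, simple and undirected. Zero forcing: given a graph $G$ and a set $S\subseteq V(G)$ of initially filled vertices, the color change rule says that if a filled vertex $v$ has exactly one unfilled neighbor $u$, then $v$ forces $u$ to become filled. $S$ is a zero forcing set if repeatedly applying this rule eventually fills every vertex of $G$. The zero forcing number $Z(G)$ is the minimum cardinality of a zero forcing set of $G$. $K_n$ is the complete graph on vertex set $\{1,\dots,n\}$. Generalized hierarchical product: for graphs $W,H$ and $U\subseteq V(W)$ (the root set), $W(U)\sqcap H$ is the graph with vertex set $V(W)\times V(H)$ in which $(x_1,y_1)$ and $(x_2,y_2)$ are adjacent iff either ($x_1=x_2\in U$ and $y_1y_2\in E(H)$) or ($y_1=y_2$ and $x_1x_2\in E(W)$). *)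

From mathcomp Require Import all_boot.
Set Implicit Arguments. Unset Strict Implicit. Unset Printing Implicit Defensive.

Section ZeroForcing.
Variable T : finType.
Variable e : rel T.

Definition can_force (S : {set T}) (v u : T) : bool :=
  [&& v \in S, u \notin S, e v u &
      [forall x, (e v x && (x \notin S)) ==> (x == u)]].

Fixpoint zf_fill (n : nat) (S : {set T}) : bool :=
  if n is n'.+1 then
    (S == setT) || [exists v, exists u, can_force S v u && zf_fill n' (u |: S)]
  else S == setT.

(* each force fills a new vertex, so #|T| forces always suffice *)
Definition zero_forcing_set (S : {set T}) : bool := zf_fill #|T| S.

(* zero forcing number: minimum cardinality of a zero forcing set
   (V(G) itself is always one, of size #|T|) *)
Definition zero_forcing_number : nat :=
  \big[minn/#|T|]_(S : {set T} | zero_forcing_set S) #|S|.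
End ZeroForcing.

Definition complete_rel (n : nat) : rel 'I_n := fun x y => x != y.
Arguments complete_rel : clear implicits.

Definition hier_prod (TW TH : finType) (eW : rel TW) (U : {set TW}) (eH : rel TH)
  : rel (TW * TH) :=
  fun p q => ((p.1 == q.1) && (p.1 \in U) && eH p.2 q.2)
          || ((p.2 == q.2) && eW p.1 q.1).

(* Pick a column x0 outside U, another column x1 and two rows y0 != y1, and
   leave unfilled the column x0 except (x0, y1), the row y0 over U, and the
   corner (x1, y1): at least h + |U| vertices.  Since x0 is not in U, the
   vertex (x0, y1) only sees row y1 and forces (x1, y1); then each (u, y1)
   with u in U forces (u, y0); finally each (x1, y) forces (x0, y).  Rather
   than tracking this sequence, it suffices that every filled superset of the
   initial set other than the whole vertex set admits some force. *)

From mathcomp Require Import all_boot all_order zify.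
Import Order.TTheory.

Set Implicit Arguments.
Unset Strict Implicit.
Unset Printing Implicit Defensive.

Lemma zero_forcing_number_le (T : finType) (e : rel T) (S : {set T}) :
  zero_forcing_set e S -> zero_forcing_number e <= #|S|.
Proof.
by move=> zfS; rewrite /zero_forcing_number -minEnat;
  exact: (@bigmin_le_cond _ nat _ #|T| S _ (fun A => #|A|) zfS).
Qed.

Lemma can_force_intro (T : finType) (e : rel T) (S : {set T}) (v u : T) :
  v \in S -> u \notin S -> e v u ->
  (forall x, e v x -> x \notin S -> x = u) -> can_force e S v u.
Proof.
move=> vS uS evu uniq_u; apply/and4P; split=> //.
by apply/forallP => x; apply/implyP => /andP [evx xS]; rewrite (uniq_u x).
Qed.

Section ForcingClosure.
Variables (T : finType) (e : rel T) (S0 : {set T}).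
Hypothesis force_exists :
  forall S : {set T}, S0 \subset S -> S != setT -> exists v u, can_force e S v u.

Lemma zf_fill_superset n (S : {set T}) :
  S0 \subset S -> #|~: S| <= n -> zf_fill e n S.
Proof.
elim: n S => [|n IHn] S sub_S0S.
  by rewrite leqn0 => /eqP /cards0_eq /(congr1 (@setC _)); rewrite setCK setC0 => /= ->.
move=> card_S /=; case: eqP => //= /eqP S_ne.
have [v [u fvu]] := force_exists sub_S0S S_ne.
apply/existsP; exists v; apply/existsP; exists u; rewrite fvu /=.
apply: IHn; first exact: subset_trans sub_S0S (subsetUr _ _).
case/and4P: fvu => _ uS _ _.
by move: card_S (cardsC S) (cardsC (u |: S)); rewrite cardsU1 uS; lia.
Qed.

Lemma zero_forcing_set_of_forces : zero_forcing_set e S0.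
Proof. exact: zf_fill_superset (subxx _) (max_card _). Qed.

End ForcingClosure.

Section HierProdComplete.
Variables (w h : nat) (U : {set 'I_w}).

Let e := hier_prod (complete_rel w) U (complete_rel h).

Lemma hier_prod_completeE a b c d :
  e (a, b) (c, d) = ((a == c) && (a \in U) && (b != d)) || ((b == d) && (a != c)).
Proof. by []. Qed.

Variables (x0 x1 : 'I_w) (y0 y1 : 'I_h).
Hypotheses (x0U : x0 \notin U) (x1x0 : x1 != x0) (y1y0 : y1 != y0).

Definition unfilled : {set 'I_w * 'I_h} :=
  [set p | ((p.1 == x0) && (p.2 != y1)) || ((p.1 \in U) && (p.2 == y0))
           || (p == (x1, y1))].

Lemma mem_unfilled a b : ((a, b) \in unfilled) =
  ((a == x0) && (b != y1)) || ((a \in U) && (b == y0)) || ((a == x1) && (b == y1)).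
Proof. by rewrite inE xpair_eqE. Qed.

Lemma card_unfilled : h + #|U| <= #|unfilled|.
Proof.
pose column := [set (x0, y) | y in [set~ y1]].
pose row := [set (u, y0) | u in U].
have card_column : #|column| = h.-1.
  by rewrite card_imset ?cardsC1 ?card_ord // => a b [].
have card_row : #|row| = #|U| by rewrite card_imset // => a b [].
have column_row : [disjoint column & row].
  apply/pred0P => p /=; apply/negP => /andP [/imsetP [y _ ->] /imsetP [u uU [eq_x0u _]]].
  by move: x0U; rewrite eq_x0u uU.
have corner_new : (x1, y1) \notin column :|: row.
  rewrite in_setU; apply/norP; split; apply/imsetP => -[z _ /eqP].
    by rewrite xpair_eqE (negbTE x1x0).
  by rewrite xpair_eqE (negbTE y1y0) andbF.
have sub_unfilled : (x1, y1) |: (column :|: row) \subset unfilled.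
  apply/subsetP => p; rewrite !inE.
  case/orP => [/eqP ->|/orP [/imsetP [y yy1 ->]|/imsetP [u uU ->]]].
  - by rewrite eqxx orbT.
  - by rewrite eqxx -in_setC1 yy1.
  - by rewrite uU eqxx orbT.
have card_union : #|column :|: row| = #|column| + #|row|.
  by apply/eqP; rewrite (leq_card_setU column row).2.
have := subset_leq_card sub_unfilled.
rewrite cardsU1 corner_new card_union card_column card_row addnA add1n prednK //.
exact: leq_ltn_trans (leq0n _) (ltn_ord y1).
Qed.

Section Forces.
Variable S : {set 'I_w * 'I_h}.
Hypothesis filled_S : ~: unfilled \subset S.

Lemma unfilled_notin p : p \notin S -> p \in unfilled.
Proof. by apply: contraR => p_filled; apply: (subsetP filled_S); rewrite inE. Qed.

Lemma force_corner : (x1, y1) \notin S -> can_force e S (x0, y1) (x1, y1).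
Proof.
move=> corner_unfilled; apply: can_force_intro => //.
- apply: (subsetP filled_S).
  by rewrite inE mem_unfilled !eqxx (negbTE x0U) [x0 == x1]eq_sym (negbTE x1x0).
- by rewrite hier_prod_completeE eqxx eq_sym x1x0 orbT.
move=> [a b]; rewrite hier_prod_completeE (negbTE x0U) andbF /=.
case/andP => /eqP <- x0a /unfilled_notin.
by rewrite mem_unfilled eq_sym (negbTE x0a) (negbTE y1y0) eqxx andbF andbT /= => /eqP ->.
Qed.

Hypothesis corner_filled : (x1, y1) \in S.

Lemma unfilled_after_corner a b : (a, b) \notin S ->
  ((a == x0) && (b != y1)) || ((a \in U) && (b == y0)).
Proof.
move=> ab_unfilled; move: (ab_unfilled) => /unfilled_notin; rewrite mem_unfilled.
case: (boolP ((a == x1) && (b == y1))) => [/andP [/eqP eq_a /eqP eq_b]|_]; last by rewrite orbF.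
by rewrite eq_a eq_b corner_filled in ab_unfilled.
Qed.

Lemma force_row u : u \in U -> (u, y0) \notin S -> can_force e S (u, y1) (u, y0).
Proof.
move=> uU uy0_unfilled; have ux0 : u != x0 by apply: contraNneq x0U => <-.
apply: can_force_intro => //.
- apply: contraR (@unfilled_after_corner u y1) _.
  by rewrite (negbTE ux0) (negbTE y1y0) !andbF.
- by rewrite hier_prod_completeE eqxx uU y1y0.
move=> [a b]; rewrite hier_prod_completeE => adj /unfilled_after_corner.
case/orP: adj => [/andP [/andP [/eqP <- _] _]|/andP [/eqP <- ua]].
  by rewrite (negbTE ux0) => /= /andP [_ /eqP ->].
by rewrite eqxx (negbTE y1y0) !andbF.
Qed.

Hypothesis row_filled : {in U, forall u, (u, y0) \in S}.

Lemma unfilled_after_row a b : (a, b) \notin S -> (a == x0) && (b != y1).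
Proof.
move=> ab_unfilled; move: (ab_unfilled) => /unfilled_after_corner.
case/orP=> // /andP [aU /eqP eq_b].
by rewrite eq_b row_filled in ab_unfilled.
Qed.

Lemma force_column b : (x0, b) \notin S -> can_force e S (x1, b) (x0, b).
Proof.
move=> x0b_unfilled; apply: can_force_intro => //.
- by apply: contraR (@unfilled_after_row x1 b) _; rewrite (negbTE x1x0).
- by rewrite hier_prod_completeE eqxx x1x0 orbT.
move=> [a c] adj /unfilled_after_row /andP [/eqP eq_a _]; subst a.
move: adj; rewrite hier_prod_completeE (negbTE x1x0) /=.
by case/andP => /eqP <-.
Qed.

End Forces.

Lemma force_available (S : {set 'I_w * 'I_h}) :
  ~: unfilled \subset S -> S != setT -> exists v u, can_force e S v u.
Proof.
move=> filled_S S_ne.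
have [corner_filled|corner_unfilled] := boolP ((x1, y1) \in S); last first.
  by exists (x0, y1), (x1, y1); exact: force_corner.
case: (boolP [exists u in U, (u, y0) \notin S]) => [/exists_inP [u uU uy0_unfilled]|].
  by exists (u, y1), (u, y0); exact: force_row.
move/exists_inPn => row_filled; have {}row_filled : {in U, forall u, (u, y0) \in S}.
  by move=> u /row_filled; rewrite negbK.
have /subsetPn [[a b] _ ab_unfilled] : ~~ (setT \subset S) by rewrite subTset.
have /andP [/eqP eq_a _] := unfilled_after_row filled_S corner_filled row_filled ab_unfilled.
rewrite eq_a in ab_unfilled.
by exists (x1, b), (x0, b); exact: force_column.
Qed.

Lemma zero_forcing_set_unfilledC : zero_forcing_set e (~: unfilled).
Proof. exact: zero_forcing_set_of_forces force_available. Qed.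

End HierProdComplete.

Lemma exists_ord_neq n (i : 'I_n) : 1 < n -> exists j : 'I_n, j != i.
Proof.
move=> n_gt1; have /card_gt0P [j] : 0 < #|[set~ i]| by rewrite cardsC1 card_ord; lia.
by rewrite in_setC1; exists j.
Qed.

Theorem mainTheorem10 (w h : nat) (U : {set 'I_w}) :
  4 <= w -> 4 <= h -> U \proper [set: 'I_w] ->
  zero_forcing_number (hier_prod (complete_rel w) U (complete_rel h))
    <= w * h - (h + #|U|).
Proof.
move=> w_ge4 h_ge4 /properP [_ [x0 _ x0U]].
have w_gt1 : 1 < w by lia.
have h_gt1 : 1 < h by lia.
have [x1 x1x0] := exists_ord_neq x0 w_gt1.
have [y1 y1y0] := exists_ord_neq (Ordinal (ltnW h_gt1)) h_gt1.
apply: leq_trans (zero_forcing_number_le (zero_forcing_set_unfilledC x0U x1x0 y1y0)) _.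
rewrite cardsCs setCK card_prod !card_ord.
exact: leq_sub2l (card_unfilled x0U x1x0 y1y0).
Qed.
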